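(* Let $n\ge1$ and $\mathcal{N}=\mathbb{C}^{2^n}$. There is no subspace $\mathcal{M}\subseteq\mathcal{N}$ of dimension $2$ that separates $\mathcal{E}_{\mathrm{phase}}$ with at most $\alpha=\frac1{10}$ error.
   Context: $\mathcal{N}$ has standard basis $\{|x\rangle : x\in\{0,1\}^n\}$. For $S\subseteq\{0,1\}^n$ and $\theta\in[0,2\pi)$, $E_{S,\theta}$ is the linear operator with $E_{S,\theta}|x\rangle=e^{i\theta}|x\rangle$ if $x\in S$ and $E_{S,\theta}|x\rangle=|x\rangle$ otherwise. $\mathcal{E}_{\mathrm{phase}}=\{E_{S,\theta}: S\subseteq\{0,1\}^n,\ \theta\in\{0,\pi/4,\pi/2\}\}$. A subspace $\mathcal{M}$ separates a set $\mathcal{E}$ of operators with at most $\alpha$ error if for any $X,Y\in\mathcal{E}$ and any unit vectors $\phi_1,\phi_2\in\mathcal{M}$ with $\phi_1^*\phi_2=0$, $|\phi_1^*X^*Y\phi_2|\le\alpha$. *)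

From HB Require Import structures.
From mathcomp Require Import all_boot all_order all_algebra.
From mathcomp Require Import complex.
From mathcomp Require Import reals trigo.
Set Implicit Arguments. Unset Strict Implicit. Unset Printing Implicit Defensive.
Import Order.TTheory GRing.Theory Num.Theory.
Local Open Scope ring_scope.
Local Open Scope complex_scope.

Section Defs.
Variable R : realType.

Definition expi (theta : R) : R[i] := (cos theta) +i* (sin theta).

(* The Hilbert space N = C^(2^n); the standard basis |x>, x in {0,1}^n, is
   indexed by 'I_(2^n) (via the binary encoding of x). *)
Variable n : nat.
Local Notation N := (2 ^ n)%N.

Definition E_op (S : {set 'I_N}) (theta : R) : 'M[R[i]]_N :=
  diag_mx (\row_(x < N) (if x \in S then expi theta else 1)).

Definition E_phase : 'M[R[i]]_N -> Prop :=
  fun X => exists (S : {set 'I_N}) (theta : R),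
      (theta = 0 \/ theta = pi / 4 \/ theta = pi / 2) /\ X = E_op S theta.

Definition adj {m p : nat} (A : 'M[R[i]]_(m, p)) : 'M[R[i]]_(p, m) :=
  (map_mx Num.conj A)^T.

Definition ip (u v : 'cV[R[i]]_N) : R[i] := (adj u *m v) 0 0.

(* A subspace of N is represented by a matrix whose rows span it (row space);
   a column vector phi lies in it iff phi^T is in the row space. *)
Definition in_sub {m : nat} (M : 'M[R[i]]_(m, N)) (phi : 'cV[R[i]]_N) : bool :=
  (phi^T <= M)%MS.

Definition separates {m : nat} (M : 'M[R[i]]_(m, N))
    (E : 'M[R[i]]_N -> Prop) (alpha : R) : Prop :=
  forall X Y : 'M[R[i]]_N, E X -> E Y ->
  forall phi1 phi2 : 'cV[R[i]]_N,
    in_sub M phi1 -> in_sub M phi2 ->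
    ip phi1 phi1 = 1 -> ip phi2 phi2 = 1 -> ip phi1 phi2 = 0 ->
    `| (adj phi1 *m adj X *m Y *m phi2) 0 0 | <= alpha%:C.

End Defs.

(* Take an orthonormal pair u, v of the plane M and put c_j = conj(u_j) v_j, so that
   sum_j c_j = <u, v> = 0.  Testing the separation property on X = 1 and Y = E_{T,pi/2}
   gives |(i - 1) sum_(j in T) c_j| <= 1/10 for every T; since the c_j sum to 0, this
   bounds the l1 norms of Re c and Im c by 1/5.  Apply this to an orthonormal basis
   a, b of M and to the rotated basis (a + b)/sqrt 2, (a - b)/sqrt 2, whose overlaps
   have real parts (|a_j|^2 - |b_j|^2)/2.  With c_j = conj(a_j) b_j,
     2 = sum_j (|a_j|^2 + |b_j|^2)
       <= sum_j ||a_j|^2 - |b_j|^2| + 2 sum_j (|Re c_j| + |Im c_j|)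
       <= 2/5 + 2 (1/5 + 1/5) < 2,
   since p + q <= |p - q| + 2 sqrt(p q) and |c_j| = |a_j| |b_j|. *)

From HB Require Import structures.
From mathcomp Require Import all_boot all_order all_algebra.
From mathcomp Require Import complex.
From mathcomp Require Import reals trigo.
From mathcomp Require Import ring lra.
Set Implicit Arguments. Unset Strict Implicit. Unset Printing Implicit Defensive.
Import Order.TTheory GRing.Theory Num.Theory.
Local Open Scope ring_scope.

Local Notation Re := (@complex.Re _).
Local Notation Im := (@complex.Im _).

Section RealInequalities.
Variable R : realFieldType.

Lemma sumr_norm_le_subset_sums (I : finType) (f : I -> R) (e : R) :
  \sum_i f i = 0 -> (forall T : {set I}, \sum_(i in T) f i <= e) ->
  \sum_i `|f i| <= 2 * e.
Proof.
move=> f0 hT; set P := [set i | 0 <= f i].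
have -> : \sum_i `|f i| = \sum_i (2 * (if i \in P then f i else 0) - f i).
  apply: eq_bigr => i _; rewrite inE.
  by case: leP => [/ger0_norm | /ltr0_norm] ->; ring.
rewrite sumrB -mulr_sumr -big_mkcond f0 subr0 ler_pM2l; first exact: hT.
by rewrite ltr0n.
Qed.

Lemma addr_le_dist_add (p q s : R) :
  0 <= p -> 0 <= q -> 0 <= s -> p * q <= s ^+ 2 -> p + q <= `|p - q| + 2 * s.
Proof.
wlog qp : p q / q <= p => [hwlog p0 q0 s0 pq | p0 q0 s0 pq].
  have [qp | /ltW pq'] := leP q p; first exact: hwlog.
  by rewrite addrC distrC hwlog // mulrC.
have qs : q <= s by rewrite -(ler_pXn2r (isT : (0 < 2)%N)) ?nnegrE //; nra.
by rewrite ger0_norm ?subr_ge0 //; lra.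
Qed.

End RealInequalities.

Section ComplexIdentities.
Variable R : rcfType.
Implicit Types x y z : R[i].

Definition sqnormc z : R := Re z ^+ 2 + Im z ^+ 2.

Lemma Re_sum (I : Type) (r : seq I) (P : pred I) (F : I -> R[i]) :
  Re (\sum_(i <- r | P i) F i) = \sum_(i <- r | P i) Re (F i).
Proof. exact: (raddf_sum (@complex.Re R : Rcomplex R -> R)). Qed.

Lemma Im_sum (I : Type) (r : seq I) (P : pred I) (F : I -> R[i]) :
  Im (\sum_(i <- r | P i) F i) = \sum_(i <- r | P i) Im (F i).
Proof. exact: (raddf_sum (@complex.Im R : Rcomplex R -> R)). Qed.

Lemma sqnormc_ge0 z : 0 <= sqnormc z.
Proof. by rewrite addr_ge0 ?sqr_ge0. Qed.

Lemma sqnormc_eq0 z : (sqnormc z == 0) = (z == 0).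
Proof.
case: z => a b; rewrite /sqnormc eq_complex /= paddr_eq0 ?sqr_ge0 //.
by rewrite !sqrf_eq0.
Qed.

(* Here [^*] elaborates to [Num.conj], which is convertible to the [conjc] of [conjc_real]. *)
Lemma conj_real_complex (t : R) : (t%:C%C)^* = t%:C%C :> R[i].
Proof. exact: conjc_real. Qed.

Lemma mulJc_self z : z^* * z = (sqnormc z)%:C%C.
Proof. by case: z => a b; rewrite /sqnormc /=; congr (Complex _ _); ring. Qed.

Lemma sqnormc_mulJ x y : sqnormc (x^* * y) = sqnormc x * sqnormc y.
Proof. by case: x => a b; case: y => c d; rewrite /sqnormc /=; ring. Qed.

Lemma Re_mulJ_add_sub (t : R) x y :
  Re ((t%:C%C * (x + y))^* * (t%:C%C * (x - y))) = t ^+ 2 * (sqnormc x - sqnormc y).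
Proof. by case: x => a b; case: y => c d; rewrite /sqnormc /=; ring. Qed.

Lemma sqnormc_add_le x y :
  sqnormc x + sqnormc y <=
  `|sqnormc x - sqnormc y| + 2 * (`|Re (x^* * y)| + `|Im (x^* * y)|).
Proof.
apply: addr_le_dist_add; rewrite ?sqnormc_ge0 ?addr_ge0 //.
rewrite -sqnormc_mulJ /sqnormc; move: (Re _) (Im _) => a b.
rewrite -(real_normK (num_real a)) -(real_normK (num_real b)).
by have := normr_ge0 a; have := normr_ge0 b; nra.
Qed.

Lemma Re_Im_le_of_norm_le z (e : R) : `|z| <= e%:C%C -> Re z <= e /\ Im z <= e.
Proof.
rewrite normc_def lecR.
have := sqr_sqrtr (sqnormc_ge0 z); have := sqrtr_ge0 (sqnormc z).
rewrite /sqnormc; move: (Num.sqrt _) => s s0 hs he; split; nra.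
Qed.

Lemma norm_le_norm_mul_i_sub1 z : `|z| <= `|('i%C - 1) * z|.
Proof.
rewrite normrM ler_peMl // normc_def /= lecR sub0r subr0 sqrrN expr1n.
by rewrite -{1}sqrtr1 ler_sqrt ?addr_ge0 // lerDl.
Qed.

End ComplexIdentities.

Section PhaseSeparation.
Variables (R : realType) (n : nat).
Local Notation N := (2 ^ n)%N.
Local Notation C := R[i].
Implicit Types u v w : 'cV[C]_N.

Definition overlap u v (j : 'I_N) : C := (u j 0)^* * v j 0.

Lemma ipE u v : ip u v = \sum_j overlap u v j.
Proof. by rewrite /ip /adj mxE; apply: eq_bigr => j _; rewrite !mxE. Qed.

Lemma ip_self w : ip w w = (\sum_j sqnormc (w j 0))%:C%C.
Proof. by rewrite ipE rmorph_sum; apply: eq_bigr => j _; apply: mulJc_self. Qed.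

Lemma ipDl u v w : ip (u + v) w = ip u w + ip v w.
Proof. by rewrite !ipE -big_split; apply: eq_bigr => j _; rewrite /overlap !mxE rmorphD mulrDl. Qed.

Lemma ipDr u v w : ip w (u + v) = ip w u + ip w v.
Proof. by rewrite !ipE -big_split; apply: eq_bigr => j _; rewrite /overlap !mxE mulrDr. Qed.

Lemma ipBl u v w : ip (u - v) w = ip u w - ip v w.
Proof. by rewrite !ipE -sumrB; apply: eq_bigr => j _; rewrite /overlap !mxE rmorphB mulrBl. Qed.

Lemma ipBr u v w : ip w (u - v) = ip w u - ip w v.
Proof. by rewrite !ipE -sumrB; apply: eq_bigr => j _; rewrite /overlap !mxE mulrBr. Qed.

Lemma ipZl (k : C) u w : ip (k *: u) w = k^* * ip u w.
Proof. by rewrite !ipE mulr_sumr; apply: eq_bigr => j _; rewrite /overlap !mxE rmorphM mulrA. Qed.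

Lemma ipZr (k : C) u w : ip w (k *: u) = k * ip w u.
Proof. by rewrite !ipE mulr_sumr; apply: eq_bigr => j _; rewrite /overlap !mxE mulrCA. Qed.

Lemma ipC u w : ip w u = (ip u w)^*.
Proof.
rewrite !ipE rmorph_sum; apply: eq_bigr => j _.
by rewrite /overlap; case: (u j 0) (w j 0) => [a b] [c d] /=; congr Complex; ring.
Qed.

Lemma exists_unit_multiple w : w != 0 -> exists k : C, ip (k *: w) (k *: w) = 1.
Proof.
move=> w_neq0; set s := \sum_j sqnormc (w j 0).
have s_gt0 : 0 < s.
  rewrite lt_def sumr_ge0 ?andbT => [|j _]; last exact: sqnormc_ge0.
  apply: contra w_neq0 => /eqP s0; apply/eqP/matrixP => j k; rewrite (ord1 k) mxE.
  apply/eqP; rewrite -sqnormc_eq0; apply/eqP.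
  exact: (psumr_eq0P (fun j _ => sqnormc_ge0 (w j 0)) s0).
exists (Num.sqrt s)^-1%:C%C.
rewrite ipZl ipZr ip_self conj_real_complex -/s mulrA -!rmorphM -expr2 exprVn.
by rewrite sqr_sqrtr ?ltW // mulVf ?gt_eqF.
Qed.

Section Subspace.
Variables (m : nat) (M : 'M[C]_(m, N)).

Lemma in_subZ (k : C) w : in_sub M w -> in_sub M (k *: w).
Proof. by rewrite /in_sub linearZ; apply: scalemx_sub. Qed.

Lemma in_subD u v : in_sub M u -> in_sub M v -> in_sub M (u + v).
Proof. by rewrite /in_sub linearD; apply: addmx_sub. Qed.

Lemma in_subB u v : in_sub M u -> in_sub M v -> in_sub M (u - v).
Proof. by move=> hu hv; rewrite -scaleN1r in_subD ?in_subZ. Qed.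

Definition orthonormal_in u v :=
  [/\ in_sub M u, in_sub M v, ip u u = 1, ip v v = 1 & ip u v = 0].

Lemma orthonormal_rotate (t : R) u v : t ^+ 2 = 2^-1 ->
  orthonormal_in u v -> orthonormal_in (t%:C%C *: (u + v)) (t%:C%C *: (u - v)).
Proof.
move=> t2 [iu iv uu vv uv].
have vu : ip v u = 0 by rewrite ipC uv conjC0.
have tt : (t%:C%C)^* * t%:C%C = 2^-1 :> C.
  by rewrite conj_real_complex -rmorphM -expr2 t2 fmorphV rmorph_nat.
split; rewrite ?ipZl ?ipZr ?mulrA ?tt.
- exact/in_subZ/in_subD.
- exact/in_subZ/in_subB.
- by rewrite ipDl !ipDr uu vv uv vu; field.
- by rewrite ipBl !ipBr uu vv uv vu; field.
- by rewrite ipDl !ipBr uu vv uv vu; field.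
Qed.

End Subspace.

Lemma exists_orthonormal_pair (M : 'M[C]_(2, N)) :
  \rank M = 2%N -> exists u v, orthonormal_in M u v.
Proof.
move=> rk; have freeM : row_free M by rewrite /row_free rk.
have row_in i : in_sub M (row i M)^T by rewrite /in_sub trmxK row_sub.
have mul_neq0 (x : 'rV[C]_2) i : x 0 i = 1 -> x *m M != 0.
  move=> x1; rewrite mulmx_free_eq0 //.
  by apply: contra_eqN x1 => /eqP ->; rewrite mxE eq_sym oner_neq0.
have [k ua] : exists k : C, ip (k *: (row 0 M)^T) (k *: (row 0 M)^T) = 1.
  by apply: exists_unit_multiple; rewrite trmx_eq0 rowE (mul_neq0 _ 0) // mxE.
set a := k *: (row 0 M)^T; have ia : in_sub M a := in_subZ k (row_in 0).
set c := ip a (row 1 M)^T.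
set b := (row 1 M)^T - c *: a.
have [l ub] : exists l : C, ip (l *: b) (l *: b) = 1.
  apply: exists_unit_multiple; rewrite -trmx_eq0 raddfB /= !linearZ /= !trmxK.
  rewrite scalerA scalerN !rowE scalemxAl -mulmxBl (mul_neq0 _ 1) //.
  by rewrite !mxE /= mulr0 subr0.
exists a, (l *: b); split => //.
- by apply/in_subZ/in_subB; [apply: row_in | apply: in_subZ].
- by rewrite ipZr /b ipBr ipZr ua mulr1 subrr mulr0.
Qed.

Lemma expi_pihalf : expi (pi / 2 : R) = 'i%C.
Proof. by rewrite /expi cos_pihalf sin_pihalf. Qed.

Lemma diag_form_entry u v (d e : 'rV[C]_N) :
  (adj u *m adj (diag_mx d) *m diag_mx e *m v) 0 0 =
  \sum_j (d 0 j)^* * e 0 j * overlap u v j.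
Proof.
rewrite /adj map_diag_mx tr_diag_mx !mul_mx_diag mxE; apply: eq_bigr => j _.
by rewrite !mxE /overlap; ring.
Qed.

Section Separation.
Variables (m : nat) (M : 'M[C]_(m, N)).
Hypothesis sepM : separates M (E_phase (R := R) (n := n)) (1 / 10).

Lemma separates_subset_overlap u v (T : {set 'I_N}) : orthonormal_in M u v ->
  `|\sum_(j in T) overlap u v j| <= (1 / 10)%:C%C.
Proof.
move=> [iu iv uu vv uv].
have EX : E_phase (E_op (R := R) (n := n) set0 0) by exists set0, 0; split; [left |].
have EY : E_phase (E_op T (pi / 2 : R)) by exists T, (pi / 2); split; [right; right |].
have := sepM EX EY iu iv uu vv uv; rewrite /E_op diag_form_entry.
rewrite (eq_bigr (fun j => overlap u v j +
                          ('i%C - 1) * (if j \in T then overlap u v j else 0))); last first.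
  by move=> j _; rewrite !mxE in_set0 expi_pihalf rmorph1 mul1r; case: ifP => _; ring.
rewrite big_split /= -ipE uv add0r -mulr_sumr -big_mkcond.
exact: le_trans (norm_le_norm_mul_i_sub1 _).
Qed.

Lemma separates_overlap_l1 u v : orthonormal_in M u v ->
  \sum_j `|Re (overlap u v j)| <= 1 / 5 /\ \sum_j `|Im (overlap u v j)| <= 1 / 5.
Proof.
move=> huv; have [_ _ _ _ uv] := huv.
have hT T := Re_Im_le_of_norm_le (separates_subset_overlap T huv).
rewrite (_ : 1 / 5 = 2 * (1 / 10)); last by field.
split.
- apply: sumr_norm_le_subset_sums => [|T]; first by rewrite -Re_sum -ipE uv.
  by rewrite -Re_sum; case: (hT T).
- apply: sumr_norm_le_subset_sums => [|T]; first by rewrite -Im_sum -ipE uv.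
  by rewrite -Im_sum; case: (hT T).
Qed.

End Separation.

Lemma not_separates_rank2 (M : 'M[C]_(2, N)) :
  \rank M = 2%N -> ~ separates M (E_phase (R := R) (n := n)) (1 / 10).
Proof.
move=> rk sepM; have [a [b hab]] := exists_orthonormal_pair rk.
have [t t2] : exists t : R, t ^+ 2 = 2^-1.
  by exists (Num.sqrt 2)^-1; rewrite exprVn sqr_sqrtr ?ler0n.
have [Re_ab Im_ab] := separates_overlap_l1 sepM hab.
have [Re_rot _] := separates_overlap_l1 sepM (orthonormal_rotate t2 hab).
have [_ _ ua ub _] := hab.
have norm_a : \sum_j sqnormc (a j 0) = 1 by apply: complexI; rewrite -ip_self.
have norm_b : \sum_j sqnormc (b j 0) = 1 by apply: complexI; rewrite -ip_self.
have Re_rotE j : `|Re (overlap (t%:C%C *: (a + b)) (t%:C%C *: (a - b)) j)| =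
    2^-1 * `|sqnormc (a j 0) - sqnormc (b j 0)|.
  by rewrite /overlap !mxE Re_mulJ_add_sub t2 normrM ger0_norm // invr_ge0 ler0n.
have := @ler_sum _ _ (index_enum _) xpredT _ _ (fun j _ => sqnormc_add_le (a j 0) (b j 0)).
rewrite big_split norm_a norm_b [X in _ <= X]big_split -mulr_sumr big_split /=.
rewrite (eq_bigr _ (fun j _ => Re_rotE j)) -mulr_sumr in Re_rot.
lra.
Qed.

End PhaseSeparation.

(* The bound holds for every n. *)
Theorem theorem4 (R : realType) (n : nat) (hn : (1 <= n)%N) :
  ~ exists M : 'M[R[i]]_(2, 2 ^ n),
      \rank M = 2%N /\ separates M (E_phase (R := R) (n := n)) (1 / 10).
Proof. by move=> [M [rk sepM]]; apply: (not_separates_rank2 rk sepM). Qed.
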